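(* Fix an integer $N\ge2$. For $H\in[0,1)$ define $$F^1_H(N)=\sum_{k=2}^N\left((k+1)^{2H}+(k-1)^{2H}-2k^{2H}\right)^2+\left(2^{2H}-2\right)^2,$$ $$F^2_H(N)=\sum_{k=2}^N(N-k+1)\left|(k+1)^{2H}+(k-1)^{2H}-2k^{2H}\right|+N\left|2^{2H}-2\right|,$$ and $E^i_H(N)=-\frac{(H-1/2)^2}{1-H}F^i_H(N)$, $i=1,2$. Then both $E^1_H(N)$ and $E^2_H(N)$ increase in $H$ on $[0,\frac12]$, vanish at $H=\frac12$, and decrease in $H$ on $[\frac12,1)$. More precisely, $E^1_H(N)$ increases from $-\frac14$ (at $H=0$) to $0$ and then decreases from $0$ to $-\infty$ (as $H\uparrow1$), and $E^2_H(N)$ increases from $-\frac N4$ (at $H=0$) to $0$ and then decreases from $0$ to $-\infty$ (as $H\uparrow1$).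
   Context: These are ''alternative entropy functionals'' of fractional Gaussian noise: $(k+1)^{2H}+(k-1)^{2H}-2k^{2H}=2\rho_k(H)$, where $\rho_k(H)$ is the lag-$k$ autocovariance of fractional Gaussian noise with Hurst index $H$; $F^1$ is the sum $\sum_{k=1}^N(2\rho_k(H))^2$ and $F^2$ is $\sum_{k=1}^N(N-k+1)|2\rho_k(H)|$. In the formulas, $(k-1)^{2H}$ for $k\ge2$ and $H=0$ equals $1$. *)

From Stdlib Require Import Reals Lra.
From Coquelicot Require Import Coquelicot.
Open Scope R_scope.

(* 2 rho_k(H) = (k+1)^{2H} + (k-1)^{2H} - 2 k^{2H}; only used for k >= 2,
   where all bases are >= 1 > 0, so Rpower is the genuine real power. *)
Definition rho2 (H : R) (k : nat) : R :=
  Rpower (INR k + 1) (2 * H) + Rpower (INR k - 1) (2 * H) - 2 * Rpower (INR k) (2 * H).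

Definition FF1 (N : nat) (H : R) : R :=
  sum_n_m (fun k => (rho2 H k) ^ 2) 2 N + (Rpower 2 (2 * H) - 2) ^ 2.

Definition FF2 (N : nat) (H : R) : R :=
  sum_n_m (fun k => (INR N - INR k + 1) * Rabs (rho2 H k)) 2 N
  + INR N * Rabs (Rpower 2 (2 * H) - 2).

Definition Efun (F : R) (H : R) : R := - ((H - 1/2) ^ 2 / (1 - H)) * F.

Definition Ent1 (N : nat) (H : R) : R := Efun (FF1 N H) H.
Definition Ent2 (N : nat) (H : R) : R := Efun (FF2 N H) H.

From Stdlib Require Import Reals Lra Lia.
From Coquelicot Require Import Coquelicot.
Open Scope R_scope.

(* Write x = 2H.  The lag-k term is the second difference r_k(x) of t |-> t^x at
   k - 1 (with 0^x = 0), and r_1 + ... + r_m telescopes to (m+1)^x - m^x - 1,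
   which is nondecreasing in x.  For x in [0,1] the power is concave with convex
   derivative, so the r_k are <= 0 and nondecreasing in k; for x in [1,2] they
   are >= 0 and nonincreasing.  In both regimes |r_k| decreases in k while the
   partial sums of |r(x)| move monotonically with x (down on [0,1], up on
   [1,2]), so Abel summation shows that F^1 = sum |r_k|^2 and
   F^2 = sum (N-k+1) |r_k| decrease in H on [0,1/2] and increase on [1/2,1).
   With u = 1 - H the weight (H-1/2)^2/(1-H) is u + 1/(4u) - 1, which has the
   same monotonicity, vanishes only at H = 1/2 and blows up as H -> 1; the
   lag-one term |2^(2H) - 2| keeps F^i positive away from H = 1/2. *)

(** * Differences of functions with monotone derivatives *)

Lemma Rle_of_is_derive_nonneg (f df : R -> R) a b : a <= b ->
  (forall t, a <= t <= b -> is_derive f t (df t)) ->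
  (forall t, a <= t <= b -> 0 <= df t) -> f a <= f b.
Proof.
  intros Hab Hd Hpos.
  destruct (Rle_lt_or_eq_dec _ _ Hab) as [Hlt|<-]; [|lra].
  destruct (MVT_cor2 f df a b Hlt) as [c [Hmvt Hc]].
  - intros t Ht. apply is_derive_Reals, Hd, Ht.
  - assert (0 <= df c) by (apply Hpos; lra). nra.
Qed.

Lemma chord_le_of_derive_nondecreasing (f df : R -> R) a c b : a <= c <= b ->
  (forall t, a <= t <= b -> is_derive f t (df t)) ->
  (forall s t, a <= s <= t -> t <= b -> df s <= df t) ->
  f c * (b - a) <= f a * (b - c) + f b * (c - a).
Proof.
  intros [Hac Hcb] Hd Hmono.
  destruct (Rle_lt_or_eq_dec _ _ Hac) as [Hac'|<-]; [|lra].
  destruct (Rle_lt_or_eq_dec _ _ Hcb) as [Hcb'|<-]; [|lra].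
  destruct (MVT_cor2 f df a c Hac') as [u [Hu Hu_in]].
  { intros t Ht. apply is_derive_Reals, Hd. lra. }
  destruct (MVT_cor2 f df c b Hcb') as [v [Hv Hv_in]].
  { intros t Ht. apply is_derive_Reals, Hd. lra. }
  assert (df u <= df v) by (apply Hmono; lra).
  assert (0 <= (df v - df u) * ((c - a) * (b - c))) by (apply Rmult_le_pos; nra).
  nra.
Qed.

Lemma second_diff_nonneg (f df : R -> R) a :
  (forall t, a <= t <= a + 2 -> is_derive f t (df t)) ->
  (forall s t, a <= s <= t -> t <= a + 2 -> df s <= df t) ->
  0 <= f a - 2 * f (a + 1) + f (a + 2).
Proof.
  intros Hd Hmono.
  pose proof (chord_le_of_derive_nondecreasing f df a (a + 1) (a + 2)
    ltac:(lra) Hd Hmono) as Hchord.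
  replace (a + 2 - a) with 2 in Hchord by ring.
  replace (a + 2 - (a + 1)) with 1 in Hchord by ring.
  replace (a + 1 - a) with 1 in Hchord by ring.
  lra.
Qed.

Lemma is_derive_shift (f : R -> R) c t l :
  is_derive f (t + c) l -> is_derive (fun u => f (u + c)) t l.
Proof.
  intros Hf.
  replace l with (scal 1 l) by (unfold scal; simpl; unfold mult; simpl; ring).
  apply (is_derive_comp f (fun u => u + c)); [exact Hf|].
  auto_derive; auto.
Qed.

Lemma third_diff_nonneg (f df ddf : R -> R) a :
  (forall t, a <= t <= a + 3 -> is_derive f t (df t)) ->
  (forall t, a <= t <= a + 3 -> is_derive df t (ddf t)) ->
  (forall s t, a <= s <= t -> t <= a + 3 -> ddf s <= ddf t) ->
  0 <= f (a + 3) - 3 * f (a + 2) + 3 * f (a + 1) - f a.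
Proof.
  intros Hd Hdd Hmono.
  set (g t := f t - 2 * f (t + 1) + f (t + 2)).
  assert (Hg : g a <= g (a + 1)).
  { apply (Rle_of_is_derive_nonneg g (fun t => df t - 2 * df (t + 1) + df (t + 2)));
      [lra| |].
    - intros t Ht. unfold g.
      apply (is_derive_plus (fun u => f u - 2 * f (u + 1)) (fun u => f (u + 2)));
        [apply (is_derive_minus f (fun u => 2 * f (u + 1)))|].
      + apply Hd. lra.
      + apply is_derive_scal, is_derive_shift, Hd. lra.
      + apply is_derive_shift, Hd. lra.
    - intros t Ht. apply (second_diff_nonneg df ddf t).
      + intros u Hu. apply Hdd. lra.
      + intros s u Hs Hu. apply Hmono; lra. }
  unfold g in Hg.
  replace (a + 1 + 1) with (a + 2) in Hg by ring.
  replace (a + 1 + 2) with (a + 3) in Hg by ring.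
  lra.
Qed.

(** * Finite differences of real powers *)

Lemma Rpower_0_r b : Rpower b 0 = 1.
Proof. unfold Rpower. rewrite Rmult_0_l. apply exp_0. Qed.

Lemma Rpower_1_l e : Rpower 1 e = 1.
Proof. unfold Rpower. rewrite ln_1, Rmult_0_r. apply exp_0. Qed.

Lemma Rpower_le_l_nonpos s t e : e <= 0 -> 0 < s <= t -> Rpower t e <= Rpower s e.
Proof.
  intros He Hst.
  replace e with (- (- e)) by ring. rewrite (Rpower_Ropp t), (Rpower_Ropp s).
  apply Rinv_le_contravar; [apply exp_pos|].
  apply Rle_Rpower_l; lra.
Qed.

Lemma is_derive_Rpower e t : 0 < t ->
  is_derive (fun u => Rpower u e) t (e * Rpower t (e - 1)).
Proof. intros Ht. apply is_derive_Reals, derivable_pt_lim_power, Ht. Qed.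

Lemma is_derive_Rpower_scaled c e t : 0 < t ->
  is_derive (fun u => c * Rpower u e) t (c * (e * Rpower t (e - 1))).
Proof. intros Ht. apply is_derive_scal, is_derive_Rpower, Ht. Qed.

Lemma Rpower_second_diff_nonpos x a : 0 <= x <= 1 -> 0 < a ->
  Rpower a x - 2 * Rpower (a + 1) x + Rpower (a + 2) x <= 0.
Proof.
  intros Hx Ha.
  enough (0 <= -1 * Rpower a x - 2 * (-1 * Rpower (a + 1) x) + -1 * Rpower (a + 2) x)
    by lra.
  apply (second_diff_nonneg (fun t => -1 * Rpower t x) (fun t => -1 * (x * Rpower t (x - 1)))).
  - intros t Ht. apply (is_derive_Rpower_scaled (-1)). lra.
  - intros s t Hs Ht. apply Rmult_le_compat_neg_l; [lra|].
    apply Rmult_le_compat_l; [lra|]. apply Rpower_le_l_nonpos; lra.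
Qed.

Lemma Rpower_second_diff_nonneg x a : 1 <= x -> 0 < a ->
  0 <= Rpower a x - 2 * Rpower (a + 1) x + Rpower (a + 2) x.
Proof.
  intros Hx Ha.
  apply (second_diff_nonneg (fun t => Rpower t x) (fun t => x * Rpower t (x - 1))).
  - intros t Ht. apply is_derive_Rpower. lra.
  - intros s t Hs Ht. apply Rmult_le_compat_l; [lra|]. apply Rle_Rpower_l; lra.
Qed.

Lemma Rpower_third_diff_nonneg x a : 0 <= x <= 1 -> 0 < a ->
  0 <= Rpower (a + 3) x - 3 * Rpower (a + 2) x + 3 * Rpower (a + 1) x - Rpower a x.
Proof.
  intros Hx Ha.
  apply (third_diff_nonneg (fun t => Rpower t x) (fun t => x * Rpower t (x - 1))
    (fun t => x * ((x - 1) * Rpower t (x - 1 - 1)))).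
  - intros t Ht. apply is_derive_Rpower. lra.
  - intros t Ht. apply is_derive_Rpower_scaled. lra.
  - intros s t Hs Ht.
    assert (Rpower t (x - 1 - 1) <= Rpower s (x - 1 - 1)) by (apply Rpower_le_l_nonpos; lra).
    assert (x * (x - 1) <= 0) by nra.
    nra.
Qed.

Lemma Rpower_third_diff_nonpos x a : 1 <= x <= 2 -> 0 < a ->
  Rpower (a + 3) x - 3 * Rpower (a + 2) x + 3 * Rpower (a + 1) x - Rpower a x <= 0.
Proof.
  intros Hx Ha.
  enough (0 <= -1 * Rpower (a + 3) x - 3 * (-1 * Rpower (a + 2) x)
                + 3 * (-1 * Rpower (a + 1) x) - -1 * Rpower a x) by lra.
  apply (third_diff_nonneg (fun t => -1 * Rpower t x) (fun t => -1 * (x * Rpower t (x - 1)))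
    (fun t => -1 * (x * ((x - 1) * Rpower t (x - 1 - 1))))).
  - intros t Ht. apply is_derive_Rpower_scaled. lra.
  - intros t Ht. apply is_derive_scal, is_derive_Rpower_scaled. lra.
  - intros s t Hs Ht.
    assert (Rpower t (x - 1 - 1) <= Rpower s (x - 1 - 1)) by (apply Rpower_le_l_nonpos; lra).
    assert (0 <= x * (x - 1)) by nra.
    nra.
Qed.

Lemma Rpower_diff_le_exponent K x y : 1 <= K -> 0 <= x <= y ->
  Rpower (K + 1) x - Rpower K x <= Rpower (K + 1) y - Rpower K y.
Proof.
  intros HK Hxy.
  assert (Hq : 1 <= (K + 1) / K).
  { apply (Rmult_le_reg_r K); [lra|]. field_simplify; lra. }
  assert (Hfactor : forall z, Rpower (K + 1) z - Rpower K z
                              = Rpower K z * (Rpower ((K + 1) / K) z - 1)).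
  { intros z. rewrite Rmult_minus_distr_l, Rpower_mult_distr by lra.
    replace (K * ((K + 1) / K)) with (K + 1) by (field; lra). ring. }
  rewrite !Hfactor.
  assert (1 <= Rpower ((K + 1) / K) x).
  { pose proof (Rle_Rpower ((K + 1) / K) 0 x Hq ltac:(lra)) as H0.
    rewrite Rpower_0_r in H0. exact H0. }
  apply Rmult_le_compat; try lra.
  - left. apply exp_pos.
  - apply Rle_Rpower; lra.
  - enough (Rpower ((K + 1) / K) x <= Rpower ((K + 1) / K) y) by lra.
    apply Rle_Rpower; lra.
Qed.

(* The third difference of t^x at 0 (with 0^x = 0) is out of reach of the lemmas
   above, t^x not being differentiable at 0.  Instead, 2^-x times it is the
   function g below, which is convex in x and vanishes at x = 1 and x = 2. *)
Section ThirdDiffAtZero.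

Let g x := Rpower (3/2) x + 3 * Rpower (1/2) x - 3.
Let dg x := ln (3/2) * Rpower (3/2) x + 3 * (ln (1/2) * Rpower (1/2) x).
Let ddg x := ln (3/2) ^ 2 * Rpower (3/2) x + 3 * (ln (1/2) ^ 2 * Rpower (1/2) x).

Let g_chord a c b : a <= c <= b -> g c * (b - a) <= g a * (b - c) + g b * (c - a).
Proof.
  intros Hc. apply (chord_le_of_derive_nondecreasing g dg); [exact Hc| |].
  - intros t _. unfold g, dg, Rpower. auto_derive; [auto | ring].
  - intros s t Hs _. apply (Rle_of_is_derive_nonneg dg ddg); [lra| |].
    + intros u _. unfold dg, ddg, Rpower. auto_derive; [auto | ring].
    + intros u _. unfold ddg.
      pose proof (exp_pos (u * ln (3/2))). pose proof (exp_pos (u * ln (1/2))).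
      unfold Rpower. nra.
Qed.

Let g_1 : g 1 = 0.
Proof. unfold g. rewrite !Rpower_1 by lra. lra. Qed.

Let g_2 : g 2 = 0.
Proof.
  unfold g. replace 2 with (1 + 1) by ring.
  rewrite !Rpower_plus, !Rpower_1 by lra. lra.
Qed.

Let g_scaled x : Rpower 2 x * g x = Rpower 3 x - 3 * Rpower 2 x + 3.
Proof.
  assert (H3 : Rpower 2 x * Rpower (3/2) x = Rpower 3 x).
  { rewrite Rpower_mult_distr by lra. f_equal. field. }
  assert (H1 : Rpower 2 x * Rpower (1/2) x = 1).
  { rewrite Rpower_mult_distr by lra. replace (2 * (1/2)) with 1 by field.
    apply Rpower_1_l. }
  unfold g. rewrite <- H3.
  transitivity (Rpower 2 x * Rpower (3/2) x + 3 * (Rpower 2 x * Rpower (1/2) x)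
                - 3 * Rpower 2 x); [ring | rewrite H1; ring].
Qed.

Lemma third_diff_at_zero_nonneg x : x <= 1 -> 0 <= Rpower 3 x - 3 * Rpower 2 x + 3.
Proof.
  intros Hx. pose proof (g_chord x 1 2 ltac:(lra)) as Hchord.
  rewrite g_1, g_2 in Hchord.
  rewrite <- g_scaled. apply Rmult_le_pos; [left; apply exp_pos | nra].
Qed.

Lemma third_diff_at_zero_nonpos x : 1 <= x <= 2 -> Rpower 3 x - 3 * Rpower 2 x + 3 <= 0.
Proof.
  intros Hx. pose proof (g_chord 1 x 2 Hx) as Hchord.
  rewrite g_1, g_2 in Hchord.
  rewrite <- g_scaled. pose proof (exp_pos (x * ln 2)).
  assert (g x <= 0) by lra. unfold Rpower. nra.
Qed.

End ThirdDiffAtZero.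

Lemma sum_n_m_nonneg (a : nat -> R) n m :
  (forall k, (n <= k <= m)%nat -> 0 <= a k) -> 0 <= sum_n_m a n m.
Proof.
  intros Ha.
  rewrite (sum_n_m_ext_loc a (fun k => Rabs (a k)))
    by (intros k Hk; rewrite Rabs_pos_eq by (apply Ha; lia); reflexivity).
  apply Rle_trans with (sum_n_m (fun _ => 0) n m).
  - rewrite sum_n_m_const. lra.
  - apply sum_n_m_le. intros k. apply Rabs_pos.
Qed.

Lemma sum_n_m_pred_diff (u : nat -> R) m :
  sum_n_m (fun k => u k - u (pred k)) 1 m = u m - u O.
Proof.
  induction m as [|m IH].
  - rewrite sum_n_m_zero by lia. change zero with 0. lra.
  - rewrite sum_n_Sm, IH by lia. change plus with Rplus. simpl pred. lra.
Qed.

Lemma sum_n_m_weighted_le (w a b : nat -> R) m n : (m <= n)%nat ->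
  (forall k, (m <= k < n)%nat -> w (S k) <= w k) -> 0 <= w n ->
  (forall k, (m <= k <= n)%nat -> sum_n_m b m k <= sum_n_m a m k) ->
  sum_n_m (fun k => w k * b k) m n <= sum_n_m (fun k => w k * a k) m n.
Proof.
  intros Hmn Hw Hwn Hpart.
  assert (Habel : forall p, (m <= p <= n)%nat ->
    w p * (sum_n_m a m p - sum_n_m b m p)
    <= sum_n_m (fun k => w k * a k) m p - sum_n_m (fun k => w k * b k) m p).
  { induction p as [|p IH]; intros Hp.
    - replace m with O by lia. rewrite !sum_n_n. lra.
    - destruct (Nat.eq_dec m (S p)) as [<-|Hne]; [rewrite !sum_n_n; lra|].
      rewrite !sum_n_Sm by lia. change plus with Rplus.
      assert (w (S p) <= w p) by (apply Hw; lia).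
      assert (sum_n_m b m p <= sum_n_m a m p) by (apply Hpart; lia).
      specialize (IH ltac:(lia)). nra. }
  specialize (Habel n ltac:(lia)). specialize (Hpart n ltac:(lia)). nra.
Qed.

Lemma sum_n_m_sqr_le (a b : nat -> R) m n : (m <= n)%nat ->
  (forall k, (m <= k < n)%nat -> a (S k) <= a k) ->
  (forall k, (m <= k < n)%nat -> b (S k) <= b k) -> 0 <= a n -> 0 <= b n ->
  (forall k, (m <= k <= n)%nat -> sum_n_m b m k <= sum_n_m a m k) ->
  sum_n_m (fun k => b k ^ 2) m n <= sum_n_m (fun k => a k ^ 2) m n.
Proof.
  intros Hmn Ha Hb Han Hbn Hpart.
  pose proof (sum_n_m_weighted_le (fun k => a k + b k) a b m n Hmn) as Hw.
  rewrite (sum_n_m_ext _ (fun k => plus (a k * b k) (b k ^ 2))),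
    (sum_n_m_ext (fun k => _ * a k) (fun k => plus (a k ^ 2) (a k * b k))),
    !sum_n_m_plus in Hw by (intros; unfold plus; simpl; ring).
  change plus with Rplus in Hw.
  enough (sum_n_m (fun k => a k * b k) m n + sum_n_m (fun k => b k ^ 2) m n
          <= sum_n_m (fun k => a k ^ 2) m n + sum_n_m (fun k => a k * b k) m n) by lra.
  apply Hw; [| lra | exact Hpart].
  intros k Hk. specialize (Ha k Hk). specialize (Hb k Hk). lra.
Qed.

(** * The functionals F^1 and F^2 *)

(* [dpow x j] is [(j+1)^x - j^x] under the convention [0^x = 0]; the case
   [j = 0] is explicit because [Rpower 0 x] is [1], not [0].  Hence
   [ddpow (2 * H) k] is [rho2 H k] for [k >= 2] and [2^(2H) - 2] for [k = 1]. *)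
Definition dpow (x : R) (j : nat) : R :=
  match j with O => 1 | S _ => Rpower (INR j + 1) x - Rpower (INR j) x end.

Definition ddpow (x : R) (k : nat) : R := dpow x k - dpow x (pred k).

Lemma ddpow_1 x : ddpow x 1 = Rpower 2 x - 2.
Proof.
  unfold ddpow, dpow; simpl pred; simpl INR.
  rewrite Rpower_1_l. replace (1 + 1) with 2 by ring. ring.
Qed.

Lemma ddpow_SS x j : ddpow x (S (S j)) =
  Rpower (INR (S j)) x - 2 * Rpower (INR (S j) + 1) x + Rpower (INR (S j) + 2) x.
Proof.
  unfold ddpow, dpow; simpl pred.
  rewrite (S_INR (S j)). replace (INR (S j) + 1 + 1) with (INR (S j) + 2) by ring. ring.
Qed.

Lemma INR_S_ge_1 j : 1 <= INR (S j).
Proof. rewrite S_INR. pose proof (pos_INR j). lra. Qed.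

Lemma dpow_le_exponent x y j : 0 <= x <= y -> dpow x j <= dpow y j.
Proof.
  intros Hxy. destruct j as [|j]; simpl; [lra|].
  apply Rpower_diff_le_exponent; [apply INR_S_ge_1 | exact Hxy].
Qed.

Lemma ddpow_nonpos x k : 0 <= x <= 1 -> (1 <= k)%nat -> ddpow x k <= 0.
Proof.
  intros Hx Hk. destruct k as [|[|j]]; [lia| |].
  - rewrite ddpow_1. pose proof (Rle_Rpower 2 x 1 ltac:(lra) ltac:(lra)).
    rewrite Rpower_1 in * by lra. lra.
  - rewrite ddpow_SS. apply Rpower_second_diff_nonpos; [exact Hx|].
    pose proof (INR_S_ge_1 j). lra.
Qed.

Lemma ddpow_nonneg x k : 1 <= x -> (1 <= k)%nat -> 0 <= ddpow x k.
Proof.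
  intros Hx Hk. destruct k as [|[|j]]; [lia| |].
  - rewrite ddpow_1. pose proof (Rle_Rpower 2 1 x ltac:(lra) Hx).
    rewrite Rpower_1 in * by lra. lra.
  - rewrite ddpow_SS. apply Rpower_second_diff_nonneg; [exact Hx|].
    pose proof (INR_S_ge_1 j). lra.
Qed.

Lemma ddpow_2_sub_1 x : ddpow x 2 - ddpow x 1 = Rpower 3 x - 3 * Rpower 2 x + 3.
Proof.
  rewrite ddpow_SS, ddpow_1. simpl INR. rewrite Rpower_1_l.
  replace (1 + 1) with 2 by ring. replace (1 + 2) with 3 by ring. ring.
Qed.

Lemma ddpow_SSS_sub_SS x j : ddpow x (S (S (S j))) - ddpow x (S (S j)) =
  Rpower (INR (S j) + 3) x - 3 * Rpower (INR (S j) + 2) x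
  + 3 * Rpower (INR (S j) + 1) x - Rpower (INR (S j)) x.
Proof.
  rewrite !ddpow_SS, (S_INR (S j)).
  replace (INR (S j) + 1 + 1) with (INR (S j) + 2) by ring.
  replace (INR (S j) + 1 + 2) with (INR (S j) + 3) by ring. ring.
Qed.

Lemma ddpow_le_succ x k : 0 <= x <= 1 -> (1 <= k)%nat -> ddpow x k <= ddpow x (S k).
Proof.
  intros Hx Hk. destruct k as [|[|j]]; [lia| |].
  - pose proof (ddpow_2_sub_1 x). pose proof (third_diff_at_zero_nonneg x). lra.
  - pose proof (ddpow_SSS_sub_SS x j). pose proof (INR_S_ge_1 j).
    pose proof (Rpower_third_diff_nonneg x (INR (S j)) Hx ltac:(lra)). lra.
Qed.

Lemma ddpow_succ_le x k : 1 <= x <= 2 -> (1 <= k)%nat -> ddpow x (S k) <= ddpow x k.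
Proof.
  intros Hx Hk. destruct k as [|[|j]]; [lia| |].
  - pose proof (ddpow_2_sub_1 x). pose proof (third_diff_at_zero_nonpos x Hx). lra.
  - pose proof (ddpow_SSS_sub_SS x j). pose proof (INR_S_ge_1 j).
    pose proof (Rpower_third_diff_nonpos x (INR (S j)) Hx ltac:(lra)). lra.
Qed.

Lemma Rabs_ddpow_succ_le x k : 0 <= x <= 2 -> (1 <= k)%nat ->
  Rabs (ddpow x (S k)) <= Rabs (ddpow x k).
Proof.
  intros Hx Hk. destruct (Rle_lt_dec x 1) as [Hx1|Hx1].
  - rewrite !Rabs_left1 by (apply ddpow_nonpos; lra || lia).
    pose proof (ddpow_le_succ x k ltac:(lra) Hk). lra.
  - rewrite !Rabs_right by (apply Rle_ge, ddpow_nonneg; lra || lia).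
    apply ddpow_succ_le; lra || lia.
Qed.

Lemma sum_Rabs_ddpow_concave x m : 0 <= x <= 1 ->
  sum_n_m (fun k => Rabs (ddpow x k)) 1 m = 1 - dpow x m.
Proof.
  intros Hx.
  rewrite (sum_n_m_ext_loc _ (fun k => - dpow x k - - dpow x (pred k))).
  - rewrite sum_n_m_pred_diff. change (dpow x O) with 1. lra.
  - intros k Hk. rewrite Rabs_left1 by (apply ddpow_nonpos; lra || lia).
    unfold ddpow. lra.
Qed.

Lemma sum_Rabs_ddpow_convex x m : 1 <= x ->
  sum_n_m (fun k => Rabs (ddpow x k)) 1 m = dpow x m - 1.
Proof.
  intros Hx.
  rewrite (sum_n_m_ext_loc _ (fun k => dpow x k - dpow x (pred k))).
  - rewrite sum_n_m_pred_diff. reflexivity.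
  - intros k Hk. rewrite Rabs_right by (apply Rle_ge, ddpow_nonneg; lra || lia).
    reflexivity.
Qed.

Lemma rho2_ddpow H k : (2 <= k)%nat -> rho2 H k = ddpow (2 * H) k.
Proof.
  intros Hk. destruct k as [|[|j]]; [lia | lia |].
  rewrite ddpow_SS. unfold rho2. rewrite (S_INR (S j)).
  replace (INR (S j) + 1 + 1) with (INR (S j) + 2) by ring.
  replace (INR (S j) + 1 - 1) with (INR (S j)) by ring. ring.
Qed.

Lemma FF1_eq N H : (1 <= N)%nat ->
  FF1 N H = sum_n_m (fun k => Rabs (ddpow (2 * H) k) ^ 2) 1 N.
Proof.
  intros HN. unfold FF1. symmetry. rewrite sum_Sn_m by exact HN. change plus with Rplus.
  rewrite pow2_abs, ddpow_1, Rplus_comm. f_equal.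
  apply sum_n_m_ext_loc. intros k Hk. rewrite pow2_abs, rho2_ddpow by lia. reflexivity.
Qed.

Lemma FF2_eq N H : (1 <= N)%nat ->
  FF2 N H = sum_n_m (fun k => (INR N - INR k + 1) * Rabs (ddpow (2 * H) k)) 1 N.
Proof.
  intros HN. unfold FF2. symmetry. rewrite sum_Sn_m by exact HN. change plus with Rplus.
  rewrite ddpow_1, Rplus_comm. f_equal.
  - apply sum_n_m_ext_loc. intros k Hk. rewrite rho2_ddpow by lia. reflexivity.
  - simpl INR. lra.
Qed.

Lemma FF1_antitone N H1 H2 : (1 <= N)%nat -> 0 <= H1 <= H2 -> H2 <= 1/2 ->
  FF1 N H2 <= FF1 N H1.
Proof.
  intros HN HH HH2. rewrite !FF1_eq by exact HN.
  apply sum_n_m_sqr_le; try apply Rabs_pos; [exact HN | | |].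
  - intros k Hk. apply Rabs_ddpow_succ_le; lra || lia.
  - intros k Hk. apply Rabs_ddpow_succ_le; lra || lia.
  - intros k Hk. rewrite !sum_Rabs_ddpow_concave by lra.
    pose proof (dpow_le_exponent (2 * H1) (2 * H2) k ltac:(lra)). lra.
Qed.

Lemma FF1_monotone N H1 H2 : (1 <= N)%nat -> 1/2 <= H1 <= H2 -> H2 <= 1 ->
  FF1 N H1 <= FF1 N H2.
Proof.
  intros HN HH HH2. rewrite !FF1_eq by exact HN.
  apply sum_n_m_sqr_le; try apply Rabs_pos; [exact HN | | |].
  - intros k Hk. apply Rabs_ddpow_succ_le; lra || lia.
  - intros k Hk. apply Rabs_ddpow_succ_le; lra || lia.
  - intros k Hk. rewrite !sum_Rabs_ddpow_convex by lra.
    pose proof (dpow_le_exponent (2 * H1) (2 * H2) k ltac:(lra)). lra.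
Qed.

Lemma FF2_antitone N H1 H2 : (1 <= N)%nat -> 0 <= H1 <= H2 -> H2 <= 1/2 ->
  FF2 N H2 <= FF2 N H1.
Proof.
  intros HN HH HH2. rewrite !FF2_eq by exact HN.
  apply sum_n_m_weighted_le; [exact HN | intros k _; rewrite S_INR; lra | lra |].
  intros k Hk. rewrite !sum_Rabs_ddpow_concave by lra.
  pose proof (dpow_le_exponent (2 * H1) (2 * H2) k ltac:(lra)). lra.
Qed.

Lemma FF2_monotone N H1 H2 : (1 <= N)%nat -> 1/2 <= H1 <= H2 -> H2 <= 1 ->
  FF2 N H1 <= FF2 N H2.
Proof.
  intros HN HH HH2. rewrite !FF2_eq by exact HN.
  apply sum_n_m_weighted_le; [exact HN | intros k _; rewrite S_INR; lra | lra |].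
  intros k Hk. rewrite !sum_Rabs_ddpow_convex by lra.
  pose proof (dpow_le_exponent (2 * H1) (2 * H2) k ltac:(lra)). lra.
Qed.

Lemma Rpower_2_sub_2_neq_0 H : H <> 1/2 -> Rpower 2 (2 * H) - 2 <> 0.
Proof.
  intros HH.
  destruct (Rlt_or_le H (1/2)) as [Hlt|Hge].
  - pose proof (Rpower_lt 2 (2 * H) 1 ltac:(lra) ltac:(lra)).
    rewrite Rpower_1 in * by lra. lra.
  - pose proof (Rpower_lt 2 1 (2 * H) ltac:(lra) ltac:(lra)).
    rewrite Rpower_1 in * by lra. lra.
Qed.

Lemma FF1_nonneg N H : 0 <= FF1 N H.
Proof.
  unfold FF1. pose proof (pow2_ge_0 (Rpower 2 (2 * H) - 2)).
  enough (0 <= sum_n_m (fun k => rho2 H k ^ 2) 2 N) by lra.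
  apply sum_n_m_nonneg. intros k _. apply pow2_ge_0.
Qed.

Lemma FF1_pos N H : H <> 1/2 -> 0 < FF1 N H.
Proof.
  intros HH. unfold FF1.
  pose proof (pow2_gt_0 _ (Rpower_2_sub_2_neq_0 H HH)).
  enough (0 <= sum_n_m (fun k => rho2 H k ^ 2) 2 N) by lra.
  apply sum_n_m_nonneg. intros k _. apply pow2_ge_0.
Qed.

Lemma FF2_sum_nonneg N H :
  0 <= sum_n_m (fun k => (INR N - INR k + 1) * Rabs (rho2 H k)) 2 N.
Proof.
  apply sum_n_m_nonneg. intros k Hk.
  apply Rmult_le_pos; [| apply Rabs_pos].
  assert (INR k <= INR N) by (apply le_INR; lia). lra.
Qed.

Lemma FF2_nonneg N H : 0 <= FF2 N H.
Proof.
  unfold FF2. pose proof (FF2_sum_nonneg N H).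
  pose proof (pos_INR N). pose proof (Rabs_pos (Rpower 2 (2 * H) - 2)). nra.
Qed.

Lemma FF2_pos N H : (1 <= N)%nat -> H <> 1/2 -> 0 < FF2 N H.
Proof.
  intros HN HH. unfold FF2. pose proof (FF2_sum_nonneg N H).
  assert (1 <= INR N) by (apply (le_INR 1); exact HN).
  pose proof (Rabs_pos_lt _ (Rpower_2_sub_2_neq_0 H HH)). nra.
Qed.

Lemma rho2_at_0 k : rho2 0 k = 0.
Proof. unfold rho2. rewrite Rmult_0_r, !Rpower_0_r. ring. Qed.

Lemma FF1_at_0 N : FF1 N 0 = 1.
Proof.
  unfold FF1. rewrite (sum_n_m_ext _ (fun _ => 0)) by (intros; rewrite rho2_at_0; apply pow_i; lia).
  rewrite sum_n_m_const, !Rmult_0_r, Rpower_0_r. ring.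
Qed.

Lemma FF2_at_0 N : FF2 N 0 = INR N.
Proof.
  unfold FF2.
  rewrite (sum_n_m_ext _ (fun _ => 0)) by (intros; rewrite rho2_at_0, Rabs_R0; apply Rmult_0_r).
  rewrite sum_n_m_const, !Rmult_0_r, Rpower_0_r, Rabs_left by lra. ring.
Qed.

(** * The entropy functionals *)

Lemma add_inv4_lt_of_le_half s t : 0 < s < t -> t <= 1/2 -> t + / (4 * t) < s + / (4 * s).
Proof.
  intros Hst Ht. apply Rlt_0_minus.
  replace (s + / (4 * s) - (t + / (4 * t))) with ((t - s) * (1 - 4 * s * t) / (4 * s * t))
    by (field; lra).
  apply Rdiv_lt_0_compat; [apply Rmult_lt_0_compat|]; nra.
Qed.

Lemma add_inv4_lt_of_ge_half s t : 1/2 <= s < t -> s + / (4 * s) < t + / (4 * t).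
Proof.
  intros Hst. apply Rlt_0_minus.
  replace (t + / (4 * t) - (s + / (4 * s))) with ((t - s) * (4 * s * t - 1) / (4 * s * t))
    by (field; lra).
  apply Rdiv_lt_0_compat; [apply Rmult_lt_0_compat|]; nra.
Qed.

Lemma add_inv4_ge_1 t : 0 < t -> 1 <= t + / (4 * t).
Proof.
  intros Ht.
  replace (t + / (4 * t)) with (1 + (2 * t - 1) ^ 2 / (4 * t)) by (field; lra).
  enough (0 <= (2 * t - 1) ^ 2 / (4 * t)) by lra.
  apply Rdiv_le_0_compat; [apply pow2_ge_0 | lra].
Qed.

Lemma Efun_eq_gap F H : H < 1 -> Efun F H = - ((1 - H) + / (4 * (1 - H)) - 1) * F.
Proof. intros HH. unfold Efun. field. lra. Qed.

Lemma Efun_half F : Efun F (1/2) = 0.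
Proof. unfold Efun. field. Qed.

Lemma Efun_lt_left H1 H2 F1 F2 : 0 <= H1 -> H1 < H2 -> H2 <= 1/2 ->
  0 <= F2 <= F1 -> 0 < F1 -> Efun F1 H1 < Efun F2 H2.
Proof.
  intros HH1 HH12 HH2 HF HF1. rewrite !Efun_eq_gap by lra.
  pose proof (add_inv4_lt_of_ge_half (1 - H2) (1 - H1) ltac:(lra)).
  pose proof (add_inv4_ge_1 (1 - H2) ltac:(lra)).
  set (w1 := 1 - H1 + / (4 * (1 - H1))) in *. set (w2 := 1 - H2 + / (4 * (1 - H2))) in *.
  nra.
Qed.

Lemma Efun_lt_right H1 H2 F1 F2 : 1/2 <= H1 -> H1 < H2 -> H2 < 1 ->
  0 <= F1 <= F2 -> 0 < F2 -> Efun F2 H2 < Efun F1 H1.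
Proof.
  intros HH1 HH12 HH2 HF HF2. rewrite !Efun_eq_gap by lra.
  pose proof (add_inv4_lt_of_le_half (1 - H2) (1 - H1) ltac:(lra) ltac:(lra)).
  pose proof (add_inv4_ge_1 (1 - H1) ltac:(lra)).
  set (w1 := 1 - H1 + / (4 * (1 - H1))) in *. set (w2 := 1 - H2 + / (4 * (1 - H2))) in *.
  nra.
Qed.

Lemma at_left_near x d : 0 < d -> at_left x (fun y => x - d < y < x).
Proof.
  intros Hd. exists (mkposreal d Hd). intros y Hy Hlt.
  revert Hy. unfold ball; simpl; unfold AbsRing_ball, abs, minus, plus, opp; simpl.
  intros Hy. rewrite Rabs_left1 in Hy by lra. lra.
Qed.

Lemma filterlim_scaled_gap_at_left_1 k : 0 < k ->
  filterlim (fun H => k * (1 - H)) (at_left 1) (at_right 0).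
Proof.
  intros Hk P [eps HP].
  assert (Heps : 0 < eps / k) by (apply Rdiv_lt_0_compat; [apply cond_pos | exact Hk]).
  exists (mkposreal _ Heps). intros H HH Hlt. apply HP.
  - revert HH. unfold ball; simpl; unfold AbsRing_ball, abs, minus, plus, opp; simpl.
    intros HH. rewrite Rabs_left1 in HH by lra. rewrite Rabs_pos_eq by nra.
    replace (pos eps) with (k * (eps / k)) by (field; lra).
    rewrite Ropp_0, Rplus_0_r. apply Rmult_lt_compat_l; lra.
  - apply Rmult_lt_0_compat; lra.
Qed.

Lemma Efun_lim_left_1 (F : R -> R) a c : a < 1 -> 0 < c ->
  (forall H, a <= H < 1 -> c <= F H) ->
  filterlim (fun H => Efun (F H) H) (at_left 1) (Rbar_locally m_infty).
Proof.
  intros Ha Hc HF.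
  apply (filterlim_le_m_infty (fun H => - / (8 / c * (1 - H)))).
  - assert (Hd : 0 < Rmin (1 - a) (1/8)) by (apply Rmin_pos; lra).
    apply (filter_imp (fun H => 1 - Rmin (1 - a) (1/8) < H < 1)).
    + intros H [Hlo Hhi].
      pose proof (Rmin_l (1 - a) (1/8)). pose proof (Rmin_r (1 - a) (1/8)).
      specialize (HF H ltac:(lra)).
      rewrite Efun_eq_gap by lra. set (u := 1 - H) in *.
      assert (Hu : 0 < u <= 1/8) by (unfold u; lra).
      replace (/ (4 * u)) with (2 * / (8 * u)) by (field; lra).
      replace (/ (8 / c * u)) with (c * / (8 * u)) by (field; lra).
      assert (1 <= / (8 * u)) by (rewrite <- Rinv_1; apply Rinv_le_contravar; lra).
      nra.
    + apply at_left_near, Hd.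
  - eapply filterlim_comp; [eapply filterlim_comp|].
    + apply filterlim_scaled_gap_at_left_1, Rdiv_lt_0_compat; lra.
    + apply filterlim_Rinv_0_right.
    + apply (filterlim_Rbar_opp p_infty).
Qed.

Lemma Efun_profile (F : R -> R) :
  (forall H, 0 <= F H) -> (forall H, H <> 1/2 -> 0 < F H) ->
  (forall H1 H2, 0 <= H1 <= H2 -> H2 <= 1/2 -> F H2 <= F H1) ->
  (forall H1 H2, 1/2 <= H1 <= H2 -> H2 <= 1 -> F H1 <= F H2) ->
  (forall H1 H2, 0 <= H1 -> H1 < H2 -> H2 <= 1/2 -> Efun (F H1) H1 < Efun (F H2) H2) /\
  Efun (F (1/2)) (1/2) = 0 /\
  (forall H1 H2, 1/2 <= H1 -> H1 < H2 -> H2 < 1 -> Efun (F H2) H2 < Efun (F H1) H1) /\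
  filterlim (fun H => Efun (F H) H) (at_left 1) (Rbar_locally m_infty).
Proof.
  intros Hnonneg Hpos Hanti Hmono. repeat split.
  - intros H1 H2 HH1 HH12 HH2. apply Efun_lt_left; try lra.
    + split; [apply Hnonneg | apply Hanti; lra].
    + apply Hpos. lra.
  - apply Efun_half.
  - intros H1 H2 HH1 HH12 HH2. apply Efun_lt_right; try lra.
    + split; [apply Hnonneg | apply Hmono; lra].
    + apply Hpos. lra.
  - apply (Efun_lim_left_1 F (3/4) (F (3/4))); [lra | apply Hpos; lra |].
    intros H HH. apply Hmono; lra.
Qed.

Theorem mainTheorem6 (N : nat) (hN : (2 <= N)%nat) :
  (* E^1 *)
  (forall H1 H2, 0 <= H1 -> H1 < H2 -> H2 <= 1/2 -> Ent1 N H1 < Ent1 N H2) /\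
  Ent1 N (1/2) = 0 /\
  (forall H1 H2, 1/2 <= H1 -> H1 < H2 -> H2 < 1 -> Ent1 N H2 < Ent1 N H1) /\
  Ent1 N 0 = - (1/4) /\
  filterlim (Ent1 N) (at_left 1) (Rbar_locally m_infty) /\
  (* E^2 *)
  (forall H1 H2, 0 <= H1 -> H1 < H2 -> H2 <= 1/2 -> Ent2 N H1 < Ent2 N H2) /\
  Ent2 N (1/2) = 0 /\
  (forall H1 H2, 1/2 <= H1 -> H1 < H2 -> H2 < 1 -> Ent2 N H2 < Ent2 N H1) /\
  Ent2 N 0 = - (INR N / 4) /\
  filterlim (Ent2 N) (at_left 1) (Rbar_locally m_infty).
Proof.
  assert (HN : (1 <= N)%nat) by lia.
  destruct (Efun_profile (FF1 N) (FF1_nonneg N) (FF1_pos N)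
    (fun H1 H2 => FF1_antitone N H1 H2 HN) (fun H1 H2 => FF1_monotone N H1 H2 HN))
    as (Left1 & Half1 & Right1 & Lim1).
  destruct (Efun_profile (FF2 N) (FF2_nonneg N) (fun H => FF2_pos N H HN)
    (fun H1 H2 => FF2_antitone N H1 H2 HN) (fun H1 H2 => FF2_monotone N H1 H2 HN))
    as (Left2 & Half2 & Right2 & Lim2).
  unfold Ent1, Ent2. rewrite FF1_at_0, FF2_at_0.
  repeat split; auto; unfold Efun; field.
Qed.
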